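(* Let $Q=(Q_0,Q_1,h,t)$ be a quiver with no oriented cycles, and let $\mu$ be an increasing slope function on $\mathrm{mod}\text{-}\mathbb{C}Q$. Then for each $\boldsymbol d\in\mathbb{N}^{Q_0}\setminus\{0\}$, exactly one of the following holds: (a) $\boldsymbol d=\delta_v$ for some $v\in Q_0$. Then $\mathcal{M}^{\rm st}_{\boldsymbol d}(\mu)=\mathcal{M}^{\rm ss}_{\boldsymbol d}(\mu)$ is a single point $*$. (b) $\boldsymbol d\neq\delta_v$ for every $v\in Q_0$, and for some $t\in\mathbb{R}$ we have $\boldsymbol d(v)=0$ for all $v\in Q_0$ with $\mu_v\neq t$. Then $\mathcal{M}^{\rm st}_{\boldsymbol d}(\mu)=\emptyset$ and $\mathcal{M}^{\rm ss}_{\boldsymbol d}(\mu)\cong[*/\mathrm{PGL}_{\boldsymbol d}]$. Also $2-\chi(\boldsymbol d,\boldsymbol d)<0$ in this case. (c) Neither (a) nor (b) holds. Then $\mathcal{M}^{\rm st}_{\boldsymbol d}(\mu)=\mathcal{M}^{\rm ss}_{\boldsymbol d}(\mu)=\emptyset$.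
   Context: A quiver $Q=(Q_0,Q_1,h,t)$ is a finite directed graph with vertex set $Q_0$, edge set $Q_1$, head and tail maps $h,t:Q_1\to Q_0$. An oriented cycle is a closed loop of directed edges. A representation $(\boldsymbol V,\boldsymbol\rho)$ of $Q$ consists of finite-dimensional $\mathbb{C}$-vector spaces $V_v$ ($v\in Q_0$) and linear maps $\rho_e:V_{t(e)}\to V_{h(e)}$ ($e\in Q_1$); these form the $\mathbb{C}$-linear abelian category $\mathrm{mod}\text{-}\mathbb{C}Q$. Its dimension vector is $\boldsymbol d=\dim(\boldsymbol V,\boldsymbol\rho)\in\mathbb{N}^{Q_0}$, $\boldsymbol d(v)=\dim V_v$. For $v\in Q_0$, $\delta_v\in\mathbb{N}^{Q_0}$ has $\delta_v(v)=1$, $\delta_v(w)=0$ for $w\ne v$. For $\boldsymbol d\in\mathbb{N}^{Q_0}$ put $R_{\boldsymbol d}=\prod_{e\in Q_1}\mathrm{Hom}(\mathbb{C}^{\boldsymbol d(t(e))},\mathbb{C}^{\boldsymbol d(h(e))})$, $\mathrm{GL}_{\boldsymbol d}=\prod_{v\in Q_0}\mathrm{GL}(\boldsymbol d(v),\mathbb{C})$ acting by $(A_v)\cdot(B_e)=(A_{h(e)}B_eA_{t(e)}^{-1})$, and $\mathrm{PGL}_{\boldsymbol d}=\mathrm{GL}_{\boldsymbol d}/\mathbb{G}_m$, where $\mathbb{G}_m$ is the diagonal scalars. The projective linear moduli stack of representations of dimension $\boldsymbol d$ is the quotient stack $\mathcal{M}^{\rm pl}_{\boldsymbol d}=[R_{\boldsymbol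 d}/\mathrm{PGL}_{\boldsymbol d}]$. A slope function $\mu$ is given by real numbers $(\mu_v)_{v\in Q_0}$ via $\mu(\boldsymbol d)=\sum_v\mu_v\boldsymbol d(v)/\sum_v\boldsymbol d(v)$ for $\boldsymbol d\in\mathbb{N}^{Q_0}\setminus\{0\}$. A nonzero object $E$ is $\mu$-stable (resp. $\mu$-semistable) if for every subobject $0\neq E'\subsetneq E$ we have $\mu(\dim E')<\mu(\dim E/E')$ (resp. $\le$). $\mathcal{M}^{\rm st}_{\boldsymbol d}(\mu)\subseteq\mathcal{M}^{\rm ss}_{\boldsymbol d}(\mu)\subseteq\mathcal{M}^{\rm pl}_{\boldsymbol d}$ denote the open substacks of $\mu$-stable, resp. $\mu$-semistable, representations of dimension $\boldsymbol d$. The slope function $\mu$ is called increasing if $\mu_v<\mu_w$ for every edge $v\to w$ in $Q$. The Euler form is $\chi_Q(\boldsymbol d,\boldsymbol e)=\sum_{v\in Q_0}\boldsymbol d(v)\boldsymbol e(v)-\sum_{e\in Q_1}\boldsymbol d(t(e))\boldsymbol e(h(e))$, and $\chi(\boldsymbol d,\boldsymbol e)=\chi_Q(\boldsymbol d,\boldsymbol e)+\chi_Q(\boldsymbol e,\boldsymbol d)$. *)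

From HB Require Import structures.
From mathcomp Require Import all_boot all_order all_algebra.
From mathcomp Require Import complex.
From mathcomp Require Import reals Rstruct.
Set Implicit Arguments. Unset Strict Implicit. Unset Printing Implicit Defensive.
Import Order.TTheory GRing.Theory Num.Theory.
Local Open Scope ring_scope.

Definition RR : realType := Rdefinitions.R.
Definition CC : fieldType := (RR[i])%C.

Record quiver := Quiver {
  Q0 : finType;
  Q1 : finType;
  qhead : Q1 -> Q0;
  qtail : Q1 -> Q0 }.

Definition no_oriented_cycles (Q : quiver) : Prop :=
  forall (e : Q1 Q) (s : seq (Q1 Q)),
    path (fun a b => qhead a == qtail b) e s -> qhead (last e s) != qtail e.

Definition dimvec (Q : quiver) := Q0 Q -> nat.

Definition dimvec_nonzero (Q : quiver) (d : dimvec Q) : Prop := exists v, d v != 0%N.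

Definition delta (Q : quiver) (v : Q0 Q) : dimvec Q := fun w => (w == v : nat).

Definition slope (Q : quiver) (mu : Q0 Q -> RR) (d : dimvec Q) : RR :=
  (\sum_(v : Q0 Q) mu v * (d v)%:R) / (\sum_(v : Q0 Q) d v)%:R.

Definition increasing (Q : quiver) (mu : Q0 Q -> RR) : Prop :=
  forall e : Q1 Q, mu (qtail e) < mu (qhead e).

(* R_d = prod_e Hom(C^{d(t e)}, C^{d(h e)}).  Linear maps are matrices
   acting on row vectors: x |-> x *m B. *)
Definition repspace (Q : quiver) (d : dimvec Q) :=
  forall e : Q1 Q, 'M[CC]_(d (qtail e), d (qhead e)).

(* GL_d, and its action (A_v).(B_e) = (A_{h e} B_e A_{t e}^{-1}),
   written in the row-vector convention. *)
Definition GLd (Q : quiver) (d : dimvec Q) :=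
  { A : forall v : Q0 Q, 'M[CC]_(d v) | forall v, A v \in unitmx }.

Definition GLact (Q : quiver) (d : dimvec Q) (A : GLd d) (B : repspace d)
  : repspace d :=
  fun e => invmx (sval A (qtail e)) *m B e *m sval A (qhead e).

(* Subrepresentations of (C^d, B): families of subspaces (row spaces of
   square matrices) U_v of C^{d(v)} with rho_e(U_{t e}) <= U_{h e}. *)
Definition subrep (Q : quiver) (d : dimvec Q) (B : repspace d)
  (U : forall v : Q0 Q, 'M[CC]_(d v)) : Prop :=
  forall e : Q1 Q, (U (qtail e) *m B e <= U (qhead e))%MS.

Definition subdim (Q : quiver) (d : dimvec Q) (U : forall v : Q0 Q, 'M[CC]_(d v))
  : dimvec Q := fun v => \rank (U v).

Definition proper_nonzero (Q : quiver) (d : dimvec Q) (U : forall v : Q0 Q, 'M[CC]_(d v))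
  : Prop := (exists v, subdim U v != 0%N) /\ (exists v, subdim U v != d v).

Definition quotdim (Q : quiver) (d : dimvec Q) (U : forall v : Q0 Q, 'M[CC]_(d v))
  : dimvec Q := fun v => (d v - subdim U v)%N.

Definition stable (Q : quiver) (mu : Q0 Q -> RR) (d : dimvec Q) (B : repspace d)
  : Prop :=
  dimvec_nonzero d /\
  forall U, subrep B U -> proper_nonzero U ->
    slope mu (subdim U) < slope mu (quotdim U).

Definition semistable (Q : quiver) (mu : Q0 Q -> RR) (d : dimvec Q) (B : repspace d)
  : Prop :=
  dimvec_nonzero d /\
  forall U, subrep B U -> proper_nonzero U ->
    slope mu (subdim U) <= slope mu (quotdim U).

(* Statements about the open substack [S / PGL_d] of M^pl_d = [R_d / PGL_d]
   determined by a GL_d-invariant subset S of (the C-points of) R_d.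
   PGL_d = GL_d / G_m acts through GL_d; scalars act trivially. *)
Definition is_scalar (Q : quiver) (d : dimvec Q) (A : GLd d) : Prop :=
  exists c : CC, forall v, sval A v = c%:M.

Definition substack_empty (Q : quiver) (d : dimvec Q) (S : repspace d -> Prop) : Prop :=
  forall B, ~ S B.

(* [S/PGL_d] is a single point *: S is a single PGL_d-orbit with trivial
   stabilizers in PGL_d (stabilizers in GL_d consist of scalars). *)
Definition substack_point (Q : quiver) (d : dimvec Q) (S : repspace d -> Prop) : Prop :=
  (exists B, S B) /\
  (forall B B', S B -> S B' -> exists A : GLd d, GLact A B = B') /\
  (forall B (A : GLd d), S B -> GLact A B = B -> is_scalar A).

(* [S/PGL_d] = [*/PGL_d]: S is a single point fixed by all of PGL_d. *)
Definition substack_BPGL (Q : quiver) (d : dimvec Q) (S : repspace d -> Prop) : Prop :=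
  exists B0, (forall B, S B <-> B = B0) /\ (forall A : GLd d, GLact A B0 = B0).

Definition chiQ (Q : quiver) (d e : dimvec Q) : int :=
  (\sum_(v : Q0 Q) (d v * e v)%:Z - \sum_(a : Q1 Q) (d (qtail a) * e (qhead a))%:Z)%R.

Definition chi (Q : quiver) (d e : dimvec Q) : int := (chiQ d e + chiQ e d)%R.

From HB Require Import structures.
From mathcomp Require Import all_boot all_order all_algebra zify.
From mathcomp Require Import complex reals Rstruct.
From Stdlib Require Import Classical FunctionalExtensionality.
Set Implicit Arguments. Unset Strict Implicit. Unset Printing Implicit Defensive.
Import Order.TTheory GRing.Theory Num.Theory.
Local Open Scope ring_scope.

(* Since mu increases along edges, the vertices of slope at least m span a
   subrepresentation of any representation.  If the support of d meets two
   slopes, taking m the larger one gives a subobject of slope >= m with a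
   quotient of slope < m, so nothing is semistable.  Otherwise no edge joins
   two vertices of the support (for d = delta_v because Q has no loops), so
   R_d is a point, every family of subspaces is a subrepresentation and
   every slope is the common value of mu on the support: the unique
   representation is semistable, and it is stable iff d has no proper
   nonzero subvector, i.e. d = delta_v, where moreover GL_d is the scalars. *)

Section Slope.
Variables (Q : quiver) (mu : Q0 Q -> RR).
Implicit Types (d : dimvec Q) (m : RR).

Lemma sum_dimvec_gt0 d : dimvec_nonzero d -> (0 : RR) < (\sum_v d v)%:R.
Proof. by move=> [w dw]; rewrite ltr0n (bigD1 w) //= ltn_addr // lt0n. Qed.

Lemma slope_ge d m :
  dimvec_nonzero d -> (forall v, d v != 0%N -> m <= mu v) -> m <= slope mu d.
Proof.
move=> d_nz mu_ge; rewrite /slope ler_pdivlMr ?sum_dimvec_gt0 //.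
rewrite natr_sum mulr_sumr; apply: ler_sum => v _.
have [->|dv] := eqVneq (d v) 0%N; first by rewrite !mulr0.
by apply: ler_wpM2r; rewrite ?ler0n ?mu_ge.
Qed.

Lemma slope_lt d m :
  dimvec_nonzero d -> (forall v, d v != 0%N -> mu v < m) -> slope mu d < m.
Proof.
move=> [w dw] mu_lt; rewrite /slope ltr_pdivrMr ?sum_dimvec_gt0 //; last by exists w.
rewrite natr_sum mulr_sumr (bigD1 w) //= [X in _ < X](bigD1 w) //=.
rewrite ltr_leD ?ltr_pM2r ?mu_lt ?ltr0n ?lt0n //.
apply: ler_sum => v _; have [->|dv] := eqVneq (d v) 0%N; first by rewrite !mulr0.
by rewrite ler_pM2r ?ltW ?mu_lt ?ltr0n ?lt0n.
Qed.

Lemma slope_const d m :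
  dimvec_nonzero d -> (forall v, d v != 0%N -> mu v = m) -> slope mu d = m.
Proof.
move=> d_nz mu_eq; rewrite /slope.
rewrite (eq_bigr (fun v => m * (d v)%:R)) => [|v _]; last first.
  by have [->|/mu_eq->] := eqVneq (d v) 0%N; rewrite ?mulr0.
by rewrite -mulr_sumr -natr_sum mulfK // gt_eqF ?sum_dimvec_gt0.
Qed.

End Slope.

Lemma mx_dim0_eq (m n : nat) (A B : 'M[CC]_(m, n)) : (m = 0 \/ n = 0)%N -> A = B.
Proof.
move=> dim0; apply/matrixP => -[i lt_i_m] [j lt_j_n]; exfalso.
by case: dim0 => dim0; move: lt_i_m lt_j_n; rewrite dim0.
Qed.

Lemma mx_dim1_scalar (n : nat) (A : 'M[CC]_n) : (n <= 1)%N -> A = (\tr A)%:M.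
Proof.
case: n A => [|[|//]] A _; first by apply: mx_dim0_eq; left.
by rewrite [LHS]mx11_scalar /mxtrace big_ord1.
Qed.

Section Representations.
Variables (Q : quiver) (d : dimvec Q).
Implicit Types (B : repspace d) (U : forall v, 'M[CC]_(d v)).

Lemma subdim_le U v : (subdim U v <= d v)%N.
Proof. exact: rank_leq_row. Qed.

Lemma proper_nonzero_dims U :
  proper_nonzero U -> dimvec_nonzero (subdim U) /\ dimvec_nonzero (quotdim U).
Proof.
move=> [[w Uw] [u Uu]]; split; first by exists w.
by exists u; rewrite /quotdim subn_eq0 -ltnNge ltn_neqAle Uu subdim_le.
Qed.

Lemma dimvec_neq_delta w : d <> delta w -> exists v, d v != delta w v.
Proof.
move=> d_neq; apply/existsP; apply: contra_notT d_neq => /existsPn d_eq.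
by apply: functional_extensionality => v; apply/eqP/negPn/d_eq.
Qed.

Definition line_at w : forall v, 'M[CC]_(d v) :=
  fun v => if v == w then pid_mx 1 else 0.

Lemma subdim_line_at w v : d w != 0%N -> subdim (line_at w) v = delta w v.
Proof.
rewrite /subdim /line_at /delta; have [->|_] := eqVneq v w => dw.
  by rewrite rank_pid_mx // lt0n.
exact: mxrank0.
Qed.

Lemma proper_line_at w : d w != 0%N -> d <> delta w -> proper_nonzero (line_at w).
Proof.
move=> dw /dimvec_neq_delta [v dv]; split.
  by exists w; rewrite subdim_line_at // /delta eqxx.
by exists v; rewrite subdim_line_at // eq_sym.
Qed.

End Representations.

Lemma delta_no_proper (Q : quiver) (v : Q0 Q) (U : forall w, 'M[CC]_(delta v w)) :
  ~ proper_nonzero U.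
Proof.
move=> [[w Uw] [u Uu]].
move: (subdim_le U w) (subdim_le U u) Uw Uu; rewrite /delta.
by case: (eqVneq w v) => [->|_]; case: (eqVneq u v) => [->|_] /=; lia.
Qed.

Lemma delta_stabilizer_scalar (Q : quiver) (v : Q0 Q) (A : GLd (delta v)) : is_scalar A.
Proof.
exists (\tr (sval A v)) => w; case: (eqVneq w v) => [->|wv].
  by apply: mx_dim1_scalar; rewrite /delta eqxx.
by apply: mx_dim0_eq; left; rewrite /delta (negbTE wv).
Qed.

Lemma sum_sqr_ge2 (Q : quiver) (d : dimvec Q) :
  dimvec_nonzero d -> (forall v, d <> delta v) -> (2 <= \sum_v d v * d v)%N.
Proof.
move=> [w dw] not_delta; rewrite (bigD1 w) //=.
have [dw2|dw_lt2] := leqP 2 (d w); first by nia.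
have dw1 : d w = 1%N by lia.
have [u] := dimvec_neq_delta (not_delta w); rewrite /delta.
have [->|uw] := eqVneq u w; first by rewrite dw1.
by rewrite (bigD1 u) //=; lia.
Qed.

Definition edgeless_support (Q : quiver) (d : dimvec Q) : Prop :=
  forall e : Q1 Q, d (qtail e) = 0%N \/ d (qhead e) = 0%N.

Lemma delta_edgeless (Q : quiver) (v : Q0 Q) :
  no_oriented_cycles Q -> edgeless_support (delta v).
Proof.
move=> acyclic e; have /= no_loop := acyclic e [::] isT; rewrite /delta.
by case: (eqVneq (qtail e) v) => [<-|_]; [right; rewrite (negbTE no_loop) | left].
Qed.

Definition GLd1 (Q : quiver) (d : dimvec Q) : GLd d :=
  exist (fun A : forall v, 'M[CC]_(d v) => forall v, A v \in unitmx)
    (fun v => 1%:M) (fun v => unitmx1 _ _).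

Section EdgelessSupport.
Variables (Q : quiver) (d : dimvec Q).
Hypothesis d_edgeless : edgeless_support d.

Lemma repspace_edgeless_eq (B B' : repspace d) : B = B'.
Proof. by apply: functional_extensionality_dep => e; apply/mx_dim0_eq/d_edgeless. Qed.

Lemma subrep_edgeless (B : repspace d) U : subrep B U.
Proof. by move=> e; rewrite (mx_dim0_eq (U _ *m B e) 0 (d_edgeless e)) sub0mx. Qed.

Lemma chi_edgeless : chi d d = 2 * (\sum_v d v * d v)%N%:Z.
Proof.
rewrite /chi /chiQ [\sum_(e : Q1 Q) _]big1 => [|e _]; last first.
  by case: (d_edgeless e) => ->; rewrite ?muln0.
by rewrite subr0 -(big_morph Posz PoszD (erefl 0%:Z)); lia.
Qed.

Lemma substack_point_edgeless (S : repspace d -> Prop) :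
  (exists B, S B) -> (forall A : GLd d, is_scalar A) -> substack_point S.
Proof.
move=> S_ne all_scalar; split=> //.
split=> [B B' _ _|B A _ _]; last exact: all_scalar.
by exists (GLd1 d); apply: repspace_edgeless_eq.
Qed.

End EdgelessSupport.

Section Stability.
Variables (Q : quiver) (mu : Q0 Q -> RR).

Lemma stable_semistable (d : dimvec Q) (B : repspace d) :
  stable mu B -> semistable mu B.
Proof. by move=> [d_nz B_st]; split=> // U subU propU; apply/ltW/B_st. Qed.

Lemma delta_stable (v : Q0 Q) (B : repspace (delta v)) : stable mu B.
Proof. by split=> [|U _ /delta_no_proper]; first by exists v; rewrite /delta eqxx. Qed.

Section SingleSlope.
Variables (d : dimvec Q) (t : RR).
Hypothesis d_single_slope : forall v, d v != 0%N -> mu v = t.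

Lemma single_slope_edgeless : increasing mu -> edgeless_support d.
Proof.
move=> mu_incr e; have [|dt] := eqVneq (d (qtail e)) 0%N; first by left.
have [|dh] := eqVneq (d (qhead e)) 0%N; first by right.
by have := mu_incr e; rewrite !d_single_slope // ltxx.
Qed.

Lemma single_slope_proper (U : forall v, 'M[CC]_(d v)) : proper_nonzero U ->
  slope mu (subdim U) = t /\ slope mu (quotdim U) = t.
Proof.
move=> /proper_nonzero_dims [sub_nz quot_nz]; split; apply: slope_const => // v.
  move=> Uv; apply: d_single_slope; apply: contraNneq Uv => dv0.
  by rewrite -leqn0 -dv0 subdim_le.
by rewrite /quotdim => /eqP; case: (eqVneq (d v) 0%N) => [->|/d_single_slope].
Qed.

Lemma single_slope_semistable (B : repspace d) : dimvec_nonzero d -> semistable mu B.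
Proof.
by move=> d_nz; split=> // U _ /single_slope_proper [-> ->].
Qed.

Lemma single_slope_not_stable (B : repspace d) :
  increasing mu -> (forall v, d <> delta v) -> ~ stable mu B.
Proof.
move=> mu_incr not_delta [[w dw] B_st].
have sub_line := subrep_edgeless (single_slope_edgeless mu_incr) B (line_at d w).
have prop_line := proper_line_at dw (not_delta w).
have := B_st _ sub_line prop_line.
by have [-> ->] := single_slope_proper prop_line; rewrite ltxx.
Qed.

End SingleSlope.

Section TwoSlopes.
Variable d : dimvec Q.
Hypothesis mu_incr : increasing mu.

Definition slope_filtration (m : RR) : forall v, 'M[CC]_(d v) :=
  fun v => if m <= mu v then 1%:M else 0.

Lemma subrep_slope_filtration (B : repspace d) m : subrep B (slope_filtration m).
Proof.
move=> e; rewrite /slope_filtration; case: ifP => [m_le|_]; last by rewrite mul0mx sub0mx.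
by rewrite ifT ?submx1 // (le_trans m_le) ?ltW.
Qed.

Lemma subdim_slope_filtration m v :
  subdim (slope_filtration m) v = if m <= mu v then d v else 0%N.
Proof. by rewrite /subdim /slope_filtration; case: ifP; rewrite ?mxrank1 ?mxrank0. Qed.

Lemma quotdim_slope_filtration m v :
  quotdim (slope_filtration m) v = if m <= mu v then 0%N else d v.
Proof. by rewrite /quotdim subdim_slope_filtration; case: ifP; rewrite ?subnn ?subn0. Qed.

Lemma two_slopes_not_semistable (B : repspace d) w u :
  d w != 0%N -> d u != 0%N -> mu u < mu w -> ~ semistable mu B.
Proof.
move=> dw du mu_uw [_ B_sst]; set U := slope_filtration (mu w).
have sub_ge : mu w <= slope mu (subdim U).
  apply: slope_ge => [|v]; first by exists w; rewrite subdim_slope_filtration lexx.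
  by rewrite subdim_slope_filtration; case: ifP; rewrite ?eqxx.
have quot_lt : slope mu (quotdim U) < mu w.
  apply: slope_lt => [|v]; first by exists u; rewrite quotdim_slope_filtration leNgt mu_uw.
  by rewrite quotdim_slope_filtration ltNge; case: ifP; rewrite ?eqxx.
have propU : proper_nonzero U.
  split; first by exists w; rewrite subdim_slope_filtration lexx.
  by exists u; rewrite subdim_slope_filtration leNgt mu_uw eq_sym.
have := B_sst U (subrep_slope_filtration B _) propU.
by move=> /(le_trans sub_ge)/le_lt_trans/(_ quot_lt); rewrite ltxx.
Qed.

End TwoSlopes.

Lemma exists_two_slopes (d : dimvec Q) : dimvec_nonzero d ->
  ~ (exists t, forall v, mu v != t -> d v = 0%N) ->
  exists w u, [/\ d w != 0%N, d u != 0%N & mu u < mu w].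
Proof.
move=> [v dv] not_single.
have /existsP [u /andP [mu_uv du]] : [exists u, (mu u != mu v) && (d u != 0%N)].
  apply: contra_notT not_single => /existsPn no_u; exists (mu v) => u mu_uv.
  by apply/eqP; move: (no_u u); rewrite mu_uv negbK.
by case: ltgtP mu_uv => // mu_lt _; [exists v, u | exists u, v].
Qed.

End Stability.

Theorem proposition5p1 (Q : quiver) (mu : Q0 Q -> RR)
  (hQ : no_oriented_cycles Q) (hmu : increasing mu)
  (d : dimvec Q) (hd : dimvec_nonzero d) :
  let caseA := exists v : Q0 Q, d = delta v in
  let caseB := (forall v : Q0 Q, d <> delta v) /\
               (exists t : RR, forall v : Q0 Q, mu v != t -> d v = 0%N) in
  let caseC := ~ caseA /\ ~ caseB in
  (* exactly one of (a), (b), (c) holds *)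
  ((caseA /\ ~ caseB /\ ~ caseC) \/ (~ caseA /\ caseB /\ ~ caseC)
     \/ (~ caseA /\ ~ caseB /\ caseC)) /\
  (caseA ->
     (forall B : repspace d, stable mu B <-> semistable mu B) /\
     substack_point (fun B : repspace d => stable mu B)) /\
  (caseB ->
     substack_empty (fun B : repspace d => stable mu B) /\
     substack_BPGL (fun B : repspace d => semistable mu B) /\
     (2 - chi d d < 0)%R) /\
  (caseC ->
     substack_empty (fun B : repspace d => stable mu B) /\
     substack_empty (fun B : repspace d => semistable mu B)).
Proof.
move=> caseA caseB caseC.
have notAB : caseA -> ~ caseB by move=> [v d_delta] [not_delta _]; apply: (not_delta v).
split.
  have [A|notA] := classic caseA; first by left; split; [|split; [exact: notAB|case]].
  have [B|notB] := classic caseB; first by right; left; split; [|split; [|case]].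
  by right; right.
split.
  move=> [v d_delta]; subst d; split=> [B|].
    by split=> [/stable_semistable|_] //; apply: delta_stable.
  apply: substack_point_edgeless; first exact: delta_edgeless.
    by exists (fun=> 0); apply: delta_stable.
  exact: delta_stabilizer_scalar.
split.
  move=> [not_delta [t concentrated]].
  have d_single v : d v != 0%N -> mu v = t.
    by move=> dv; apply/eqP; apply: contraNT dv => /concentrated ->.
  have d_edgeless := single_slope_edgeless d_single hmu.
  split; first by move=> B; apply: single_slope_not_stable d_single _ hmu not_delta.
  split; last by rewrite chi_edgeless //; have := sum_sqr_ge2 hd not_delta; lia.
  exists (fun=> 0); split=> [B|A]; last exact: repspace_edgeless_eq.
  split=> _; first exact: repspace_edgeless_eq.
  exact: single_slope_semistable d_single _ hd.
move=> [notA notB].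
have [|w [u [dw du mu_uw]]] := exists_two_slopes (mu := mu) hd.
  by move=> concentrated; apply: notB; split=> // v d_delta; apply: notA; exists v.
have not_sst B := two_slopes_not_semistable hmu (B := B) dw du mu_uw.
split=> B B_st; apply: (not_sst B); [exact: stable_semistable | exact: B_st].
Qed.
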